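(* Let $\phi: M_n\to M_n$ be a unital PPT map with $\phi\circ\phi=\phi$. Then the range $\phi(M_n)$ is an abelian C$^*$-algebra with respect to the product $a\ast b=\phi(ab)$ for $a,b\in\phi(M_n)$ (with the involution and norm inherited from $M_n$).
   Context: $M_n$ denotes the $n\times n$ complex matrices. A linear map is completely positive (CP) if $\phi\otimes \mathrm{id}_k$ is positive for all $k$. A CP map $\phi: M_n\to M_n$ is PPT if $T\circ\phi$ is CP, where $T$ is the transpose map on $M_n$. It is known (Choi–Effros) that the range of an idempotent unital CP map is a C$^*$-algebra under the product $a\ast b=\phi(ab)$. *)

From HB Require Import structures.
From mathcomp Require Import all_boot all_order all_algebra.
From mathcomp Require Import complex.
From mathcomp Require Import boolp classical_sets reals.
Set Implicit Arguments. Unset Strict Implicit. Unset Printing Implicit Defensive.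
Import Order.TTheory GRing.Theory Num.Theory.
Local Open Scope ring_scope.
Local Open Scope complex_scope.

Section Defs.
Variable R : realType.
Local Notation C := R[i].
Variable n : nat.

Definition adjmx (m p : nat) (A : 'M[C]_(m, p)) : 'M[C]_(p, m) :=
  map_mx (@conjc R) A^T.

(* A k x k block matrix with n x n blocks, i.e. an element of M_k(M_n),
   is positive (semidefinite) iff  sum_{i,j} v_i^* X_ij v_j >= 0 for every
   vector v = (v_1,...,v_k) of C^{kn}. In a numClosedField, 0 <= z means z is
   real and nonnegative. *)
Definition block_pos (k : nat) (X : 'I_k -> 'I_k -> 'M[C]_n) : Prop :=
  forall v : 'I_k -> 'cV[C]_n,
    0 <= \sum_(i < k) \sum_(j < k) (adjmx (v i) *m X i j *m v j) 0 0.

(* phi is completely positive: phi (x) id_k is positive for all k *)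
Definition completely_positive (phi : 'M[C]_n -> 'M[C]_n) : Prop :=
  forall (k : nat) (X : 'I_k -> 'I_k -> 'M[C]_n),
    block_pos X -> block_pos (fun i j => phi (X i j)).

Definition PPT_map (phi : 'M[C]_n -> 'M[C]_n) : Prop :=
  completely_positive phi /\ completely_positive (fun A => (phi A)^T).

Definition vnorm (x : 'cV[C]_n) : R :=
  Num.sqrt (\sum_(i < n) ComplexField.Normc.normc (x i 0) ^+ 2).

Definition opnorm (A : 'M[C]_n) : R :=
  sup [set r : R | exists x : 'cV[C]_n, vnorm x <= 1 /\ r = vnorm (A *m x)].

(* (S, mul, inv, nrm) is a C*-algebra: S a complex subspace of M_n carrying
   an associative bilinear product mul, a conjugate-linear antimultiplicative
   involution inv, and a submultiplicative norm nrm satisfying the C*-identity.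
   (Completeness is automatic, S being finite dimensional.) *)
Definition is_Cstar_algebra (S : 'M[C]_n -> Prop)
    (mul : 'M[C]_n -> 'M[C]_n -> 'M[C]_n) (inv : 'M[C]_n -> 'M[C]_n)
    (nrm : 'M[C]_n -> R) : Prop :=
  [/\ S 0,
      (forall a b, S a -> S b -> S (a + b)) &
      (forall (c : C) a, S a -> S (c *: a))] /\
  [/\ (forall a b, S a -> S b -> S (mul a b)),
      (forall a b c, S a -> S b -> S c -> mul (mul a b) c = mul a (mul b c)),
      (forall a b c, S a -> S b -> S c -> mul a (b + c) = mul a b + mul a c),
      (forall a b c, S a -> S b -> S c -> mul (a + b) c = mul a c + mul b c) &
      (forall (z : C) a b, S a -> S b ->
          mul (z *: a) b = z *: mul a b /\ mul a (z *: b) = z *: mul a b)] /\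
  [/\ (forall a, S a -> S (inv a)),
      (forall a, S a -> inv (inv a) = a),
      (forall a b, S a -> S b -> inv (a + b) = inv a + inv b),
      (forall (z : C) a, S a -> inv (z *: a) = conjc z *: inv a) &
      (forall a b, S a -> S b -> inv (mul a b) = mul (inv b) (inv a))] /\
  [/\ (forall a, S a -> 0 <= nrm a),
      (forall a, S a -> nrm a = 0 -> a = 0),
      (forall a b, S a -> S b -> nrm (a + b) <= nrm a + nrm b),
      (forall (z : C) a, S a -> nrm (z *: a) = ComplexField.Normc.normc z * nrm a) &
      ((forall a b, S a -> S b -> nrm (mul a b) <= nrm a * nrm b) /\
      (forall a, S a -> nrm (mul (inv a) a) = nrm a ^+ 2))].

Definition is_abelian (S : 'M[C]_n -> Prop)
    (mul : 'M[C]_n -> 'M[C]_n -> 'M[C]_n) : Prop :=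
  forall a b, S a -> S b -> mul a b = mul b a.

End Defs.

From HB Require Import structures.
From mathcomp Require Import all_boot all_order all_algebra.
From mathcomp Require Import complex.
From mathcomp Require Import boolp classical_sets reals.
From mathcomp Require Import ring lra.
Import Order.TTheory GRing.Theory Num.Theory.
Local Open Scope ring_scope.
Local Open Scope complex_scope.
Set Implicit Arguments. Unset Strict Implicit. Unset Printing Implicit Defensive.

(* Let B = phi(M_n). A unital CP map satisfies the Kadison-Schwarz inequality
   phi(x)^* phi(x) <= phi(x^* x). Applied to the unital CP map T o phi at c^*,
   c in B, it gives c^* c <= phi(c c^* ), hence phi(c^* c) <= phi(c c^* ) after
   applying phi; by symmetry phi(c^* c) = phi(c c^* ), and polarizing this
   identity yields phi(a b) = phi(b a) on B. Associativity of a * b = phi(a b)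
   is the Choi-Effros bimodule property phi(c y) = phi(c phi(y)) for c in B,
   which follows from Kadison-Schwarz at c^* + t y, with phi(y) = 0 and t
   arbitrary. Finally Kadison-Schwarz makes phi contractive for the operator
   norm, which gives submultiplicativity and ||phi(a^* a)|| <= ||a||^2, while
   a^* a <= phi(a^* a) for a in B gives the reverse inequality. *)

Lemma quadratic_ge0_disc (R : realFieldType) (a b c : R) : 0 <= c ->
  (forall t, 0 <= a + 2 * b * t + c * t ^+ 2) -> b ^+ 2 <= a * c.
Proof.
move=> c0 h; have [c_gt0|c_le0] := ltrP 0 c.
  have := h (- b / c).
  have -> : a + 2 * b * (- b / c) + c * (- b / c) ^+ 2 = (a * c - b ^+ 2) / c.
    by field; rewrite gt_eqF.
  by rewrite pmulr_lge0 ?invr_gt0 // subr_ge0.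
have c_eq0 : c = 0 by apply/eqP; rewrite eq_le c_le0 c0.
subst c.
have [->|b_neq0] := eqVneq b 0; first by rewrite expr0n mulr0.
have := h (- (a + 1) / (2 * b)).
have -> : a + 2 * b * (- (a + 1) / (2 * b)) + 0 * (- (a + 1) / (2 * b)) ^+ 2 = -1.
  by field.
by rewrite oppr_ge0 ler10.
Qed.

Lemma sqrtr_le_sqr (R : rcfType) (x y : R) : 0 <= y -> x <= y ^+ 2 -> Num.sqrt x <= y.
Proof. by move=> y0 h; apply: le_trans (ler_wsqrtr h) _; rewrite sqrtr_sqr ger0_norm. Qed.

Section ComplexFacts.
Variable R : realType.
Local Notation C := R[i].
Local Notation Re := (@complex.Re R).
Local Notation Im := (@complex.Im R).
Local Notation normc := (@ComplexField.Normc.normc R).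

Lemma ReD (x y : C) : Re (x + y) = Re x + Re y. Proof. by case: x; case: y. Qed.
Lemma ImD (x y : C) : Im (x + y) = Im x + Im y. Proof. by case: x; case: y. Qed.
Lemma ReB (x y : C) : Re (x - y) = Re x - Re y. Proof. by case: x; case: y. Qed.
Lemma ImN (x : C) : Im (- x) = - Im x. Proof. by case: x. Qed.
Lemma ReJ (x : C) : Re (conjc x) = Re x. Proof. by case: x. Qed.
Lemma ImJ (x : C) : Im (conjc x) = - Im x. Proof. by case: x. Qed.
Lemma ReiM (x : C) : Re ('i * x) = - Im x.
Proof. by case: x => a b /=; rewrite !mul0r !mul1r sub0r. Qed.
Lemma ImiM (x : C) : Im ('i * x) = Re x.
Proof. by case: x => a b /=; rewrite !mul0r !mul1r add0r. Qed.
Lemma ReRM (s : R) (x : C) : Re (s%:C * x) = s * Re x.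
Proof. by case: x => a b /=; rewrite mul0r subr0. Qed.
Lemma ImRM (s : R) (x : C) : Im (s%:C * x) = s * Im x.
Proof. by case: x => a b /=; rewrite mul0r addr0. Qed.

Lemma i_neq0 : ('i : C) != 0.
Proof. by apply/eqP => /(congr1 Im) /= /eqP; rewrite oner_eq0. Qed.

Lemma complex_eqP (x y : C) : Re x = Re y -> Im x = Im y -> x = y.
Proof. by case: x => a b; case: y => c d /= -> ->. Qed.

Lemma conji : conjc ('i : C) = - 'i.
Proof. by apply: complex_eqP; rewrite /= ?oppr0. Qed.

Lemma ge0cE (z : C) : (0 <= z) <-> (Im z = 0 /\ 0 <= Re z).
Proof. by rewrite lecE /=; split => [/andP[/eqP -> ->]|[-> ->]]; rewrite ?eqxx. Qed.

Lemma normc_ge0 (z : C) : 0 <= normc z.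
Proof. by case: z => a b; rewrite sqrtr_ge0. Qed.

Lemma sqr_normc_ReIm (z : C) : normc z ^+ 2 = Re z ^+ 2 + Im z ^+ 2.
Proof. by case: z => a b; rewrite /= sqr_sqrtr ?addr_ge0 ?sqr_ge0. Qed.

Lemma mulJc (z : C) : conjc z * z = (normc z ^+ 2 : R)%:C.
Proof.
apply: complex_eqP; rewrite sqr_normc_ReIm; case: z => a b /=.
  by rewrite mulNr opprK !expr2.
by rewrite mulNr mulrC addrN.
Qed.

Lemma normc_real (r : R) : normc r%:C = `|r|.
Proof. by rewrite /= expr0n /= addr0 sqrtr_sqr. Qed.

Lemma first_order_ge0_eq0 (d k : C) : 0 <= k ->
  (forall t : C, 0 <= t * d + conjc t * conjc d + conjc t * t * k) -> d = 0.
Proof.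
move=> /ge0cE[_ k_ge0] h.
have hRe (t : C) : 0 <= 2 * Re (t * d) + Re k * normc t ^+ 2.
  have /ge0cE[_] := h t.
  by rewrite -rmorphM /= mulJc !ReD ReRM ReJ mulrC; lra.
have sqr_eq0 (b : R) : b ^+ 2 <= 0 * Re k -> b = 0.
  by rewrite mul0r => hb; apply/eqP; rewrite -sqrf_eq0 eq_le hb sqr_ge0.
apply: complex_eqP; rewrite [RHS]/=.
  apply: sqr_eq0; apply: quadratic_ge0_disc => // s.
  by have := hRe s%:C; rewrite ReRM sqr_normc_ReIm /= expr0n addr0; lra.
apply/eqP; rewrite -oppr_eq0; apply/eqP; apply: sqr_eq0; apply: quadratic_ge0_disc => // s.
have := hRe (s%:C * 'i); rewrite -[_ * 'i * d]mulrA ReRM ReiM sqr_normc_ReIm ReRM ImRM /=.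
by rewrite mulr0 expr0n add0r; lra.
Qed.

End ComplexFacts.

Section Matrices.
Variable R : realType.
Local Notation C := R[i].
Local Notation Re := (@complex.Re R).
Local Notation Im := (@complex.Im R).
Local Notation normc := (@ComplexField.Normc.normc R).

Lemma adjmxE m p (A : 'M[C]_(m, p)) i j : adjmx A i j = conjc (A j i).
Proof. by rewrite !mxE. Qed.

Lemma adjmxK m p : cancel (@adjmx R m p) (@adjmx R p m).
Proof. by move=> A; apply/matrixP => i j; rewrite !adjmxE conjcK. Qed.

Lemma adjmx_inj m p : injective (@adjmx R m p).
Proof. exact: can_inj (@adjmxK m p). Qed.

Lemma adjmxD m p (A B : 'M[C]_(m, p)) : adjmx (A + B) = adjmx A + adjmx B.
Proof. by apply/matrixP => i j; rewrite !mxE rmorphD. Qed.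

Lemma adjmxZ m p (z : C) (A : 'M[C]_(m, p)) : adjmx (z *: A) = conjc z *: adjmx A.
Proof. by apply/matrixP => i j; rewrite !mxE rmorphM. Qed.

Lemma adjmx0 m p : adjmx (0 : 'M[C]_(m, p)) = 0.
Proof. by apply/matrixP => i j; rewrite !mxE conjc0. Qed.

Lemma adjmxM m p q (A : 'M[C]_(m, p)) (B : 'M[C]_(p, q)) :
  adjmx (A *m B) = adjmx B *m adjmx A.
Proof.
apply/matrixP => i j; rewrite !mxE rmorph_sum; apply: eq_bigr => k _.
by rewrite rmorphM !adjmxE mulrC.
Qed.

Variable n : nat.
Local Notation M := 'M[C]_n.
Local Notation V := 'cV[C]_n.
Implicit Types (u v w : V) (A B a b c x y : M).

Definition dotv (u v : V) : C := (adjmx u *m v) 0 0.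

Lemma dotvE u v : dotv u v = \sum_i conjc (u i 0) * v i 0.
Proof. by rewrite /dotv mxE; apply: eq_bigr => i _; rewrite adjmxE. Qed.

Lemma dotvDr u v w : dotv u (v + w) = dotv u v + dotv u w.
Proof. by rewrite !dotvE -big_split; apply: eq_bigr => i _; rewrite mxE mulrDr. Qed.

Lemma dotvDl u v w : dotv (v + w) u = dotv v u + dotv w u.
Proof. by rewrite !dotvE -big_split; apply: eq_bigr => i _; rewrite mxE rmorphD mulrDl. Qed.

Lemma dotvZr u v (z : C) : dotv u (z *: v) = z * dotv u v.
Proof. by rewrite !dotvE mulr_sumr; apply: eq_bigr => i _; rewrite mxE mulrCA. Qed.

Lemma dotvZl u v (z : C) : dotv (z *: v) u = conjc z * dotv v u.
Proof. by rewrite !dotvE mulr_sumr; apply: eq_bigr => i _; rewrite mxE rmorphM mulrA. Qed.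

Lemma dotvNr u v : dotv u (- v) = - dotv u v.
Proof. by rewrite -scaleN1r dotvZr mulN1r. Qed.

Lemma dotvNl u v : dotv (- v) u = - dotv v u.
Proof. by rewrite -scaleN1r dotvZl rmorphN1 mulN1r. Qed.

Lemma dotvBr u v w : dotv u (v - w) = dotv u v - dotv u w.
Proof. by rewrite dotvDr dotvNr. Qed.

Lemma dotv0r u : dotv u 0 = 0.
Proof. by rewrite /dotv mulmx0 mxE. Qed.

Lemma dotv0l u : dotv 0 u = 0.
Proof. by rewrite /dotv adjmx0 mul0mx mxE. Qed.

Lemma dotv_mull (A : M) u v : dotv (A *m u) v = dotv u (adjmx A *m v).
Proof. by rewrite /dotv adjmxM mulmxA. Qed.

Lemma dotv_mulr (A : M) u v : dotv u (A *m v) = dotv (adjmx A *m u) v.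
Proof. by rewrite dotv_mull adjmxK. Qed.

Lemma conj_dotv u v : conjc (dotv u v) = dotv v u.
Proof.
rewrite !dotvE rmorph_sum; apply: eq_bigr => i _.
by rewrite rmorphM /= conjcK mulrC.
Qed.

Definition sqnorm (u : V) : R := \sum_i normc (u i 0) ^+ 2.

Lemma sqnorm_ge0 u : 0 <= sqnorm u.
Proof. by apply: sumr_ge0 => i _; rewrite sqr_ge0. Qed.

Lemma dotvv u : dotv u u = (sqnorm u)%:C.
Proof. by rewrite dotvE /sqnorm rmorph_sum; apply: eq_bigr => i _; rewrite mulJc. Qed.

Lemma dotvv_ge0 u : 0 <= dotv u u.
Proof. by rewrite dotvv ler0c sqnorm_ge0. Qed.

Lemma sqnorm_eq0 u : sqnorm u = 0 -> u = 0.
Proof.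
move=> /eqP; rewrite psumr_eq0 => [/allP h|i _]; last by rewrite sqr_ge0.
apply/matrixP => i j; rewrite ord1 mxE.
have /h /= := mem_index_enum i; rewrite sqrf_eq0 => /eqP.
exact: ComplexField.Normc.eq0_normc.
Qed.

Lemma sqnormZ (z : C) u : sqnorm (z *: u) = normc z ^+ 2 * sqnorm u.
Proof. by apply: complexI; rewrite -dotvv dotvZl dotvZr mulrA mulJc dotvv -rmorphM. Qed.

Lemma sqnorm_expand u w (s : R) :
  sqnorm (u + s%:C *: w) = sqnorm u + 2 * Re (dotv u w) * s + sqnorm w * s ^+ 2.
Proof.
have -> : sqnorm (u + s%:C *: w) = Re (dotv (u + s%:C *: w) (u + s%:C *: w)) by rewrite dotvv.
rewrite dotvDl !dotvDr !dotvZl !dotvZr conjc_real !ReD mulrA -rmorphM !ReRM.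
by rewrite -(conj_dotv w u) ReJ !dotvv /=; ring.
Qed.

Lemma vnorm_sqrt u : vnorm u = Num.sqrt (sqnorm u).
Proof. by []. Qed.

Lemma vnorm_ge0 u : 0 <= vnorm u.
Proof. exact: sqrtr_ge0. Qed.

Lemma sqr_vnorm u : vnorm u ^+ 2 = sqnorm u.
Proof. by rewrite sqr_sqrtr ?sqnorm_ge0. Qed.

Lemma vnorm_eq0 u : vnorm u = 0 -> u = 0.
Proof. by move=> h; apply: sqnorm_eq0; rewrite -sqr_vnorm h expr0n. Qed.

Lemma vnorm0 : vnorm (0 : V) = 0.
Proof.
rewrite vnorm_sqrt (_ : sqnorm 0 = 0) ?sqrtr0 //.
by apply: big1 => i _; rewrite mxE ComplexField.Normc.normc0 expr0n.
Qed.

Lemma cauchy_schwarz u w : Re (dotv u w) <= vnorm u * vnorm w.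
Proof.
have disc : Re (dotv u w) ^+ 2 <= sqnorm u * sqnorm w.
  by apply: quadratic_ge0_disc (sqnorm_ge0 w) _ => t; rewrite -sqnorm_expand sqnorm_ge0.
rewrite -sqrtrM ?sqnorm_ge0 //; apply: le_trans (ler_norm _) _.
by rewrite -sqrtr_sqr ler_wsqrtr.
Qed.

Lemma vnormD u w : vnorm (u + w) <= vnorm u + vnorm w.
Proof.
rewrite vnorm_sqrt; apply: sqrtr_le_sqr; first by rewrite addr_ge0 ?vnorm_ge0.
have := sqnorm_expand u w 1; rewrite scale1r => ->.
rewrite sqrrD !sqr_vnorm expr1n !mulr1 -mulr_natl; have := cauchy_schwarz u w; lra.
Qed.

Lemma vnormZ (z : C) u : vnorm (z *: u) = normc z * vnorm u.
Proof. by rewrite vnorm_sqrt sqnormZ sqrtrM ?sqr_ge0 // sqrtr_sqr ger0_norm ?normc_ge0. Qed.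

Lemma vnorm_sum I (r : seq I) (P : pred I) (F : I -> V) :
  vnorm (\sum_(i <- r | P i) F i) <= \sum_(i <- r | P i) vnorm (F i).
Proof.
elim/big_rec2: _ => [|i y1 y2 _ h]; first by rewrite vnorm0.
by apply: le_trans (vnormD _ _) _; rewrite lerD2l.
Qed.

Lemma normc_entry_le u i : normc (u i 0) <= vnorm u.
Proof.
rewrite -(ger0_norm (normc_ge0 (u i 0))) -sqrtr_sqr vnorm_sqrt; apply: ler_wsqrtr.
by rewrite /sqnorm (bigD1 i) //= lerDl; apply: sumr_ge0 => j _; exact: sqr_ge0.
Qed.

Lemma mx_eq0 (A : M) : (forall x : V, A *m x = 0) -> A = 0.
Proof.
move=> h; apply/matrixP => i j.
by have /matrixP/(_ i 0) := h (delta_mx j 0); rewrite -colE !mxE.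
Qed.

Definition opnorm_set (A : M) : set R :=
  [set r | exists x : V, vnorm x <= 1 /\ r = vnorm (A *m x)]%classic.

Lemma opnormE A : opnorm A = sup (opnorm_set A).
Proof. by []. Qed.

Lemma opnorm_set_ubound (A : M) : has_ubound (opnorm_set A).
Proof.
pose K := \sum_i \sum_(j < 1) vnorm (A *m delta_mx i j).
have K_ge0 : 0 <= K by apply: sumr_ge0 => i _; apply: sumr_ge0 => j _; exact: vnorm_ge0.
have bound (x : V) : vnorm (A *m x) <= K * vnorm x.
  rewrite {1}(matrix_sum_delta x) mulmx_sumr.
  apply: le_trans (vnorm_sum _ _ _) _; rewrite mulr_suml; apply: ler_sum => i _.
  rewrite mulmx_sumr; apply: le_trans (vnorm_sum _ _ _) _; rewrite mulr_suml.
  apply: ler_sum => j _; rewrite -scalemxAr vnormZ mulrC.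
  by apply: ler_wpM2l; [exact: vnorm_ge0 | rewrite ord1; exact: normc_entry_le].
exists K => r [x [x_le1 ->]]; apply: le_trans (bound x) _.
by rewrite -[leRHS]mulr1; exact: ler_wpM2l.
Qed.

Lemma opnorm_set0 (A : M) : opnorm_set A 0.
Proof. by exists 0; rewrite vnorm0 mulmx0 vnorm0 ler01. Qed.

Lemma opnorm_ge0 (A : M) : 0 <= opnorm A.
Proof. by rewrite opnormE; apply: (ub_le_sup (opnorm_set_ubound A)); exact: opnorm_set0. Qed.

Lemma opnorm_mulmx (A : M) (x : V) : vnorm (A *m x) <= opnorm A * vnorm x.
Proof.
have [vx0|vx_neq0] := eqVneq (vnorm x) 0.
  by rewrite vx0 mulr0 (vnorm_eq0 vx0) mulmx0 vnorm0.
have vx_gt0 : 0 < vnorm x by rewrite lt_def vx_neq0 vnorm_ge0.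
pose y := (vnorm x)^-1%:C *: x.
have y_norm : vnorm y = 1 by rewrite vnormZ normc_real ger0_norm ?invr_ge0 ?vnorm_ge0 // mulVf.
have : vnorm (A *m y) <= opnorm A.
  by rewrite opnormE; apply: (ub_le_sup (opnorm_set_ubound A)); exists y; rewrite y_norm.
rewrite -scalemxAr vnormZ normc_real ger0_norm ?invr_ge0 ?vnorm_ge0 //.
by rewrite -ler_pdivlMl ?invr_gt0 // invrK mulrC.
Qed.

Lemma opnorm_le (A : M) (c : R) : 0 <= c ->
  (forall x : V, vnorm (A *m x) <= c * vnorm x) -> opnorm A <= c.
Proof.
move=> c0 h; rewrite opnormE; apply: ge_sup; first by exists 0; exact: opnorm_set0.
move=> r [x [x_le1 ->]]; apply: le_trans (h x) _.
by rewrite -[leRHS]mulr1; apply: ler_wpM2l.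
Qed.

Lemma opnorm_eq0 (A : M) : opnorm A = 0 -> A = 0.
Proof.
move=> h; apply: mx_eq0 => x; apply: vnorm_eq0; apply/eqP.
by rewrite eq_le vnorm_ge0 andbT; have := opnorm_mulmx A x; rewrite h mul0r.
Qed.

Lemma opnormD (A B : M) : opnorm (A + B) <= opnorm A + opnorm B.
Proof.
apply: opnorm_le; first by rewrite addr_ge0 ?opnorm_ge0.
move=> x; rewrite mulmxDl; apply: le_trans (vnormD _ _) _.
by rewrite mulrDl lerD ?opnorm_mulmx.
Qed.

Lemma opnormZ (z : C) (A : M) : opnorm (z *: A) = normc z * opnorm A.
Proof.
have scale_le (t : C) B : opnorm (t *: B) <= normc t * opnorm B.
  apply: opnorm_le; first by rewrite mulr_ge0 ?normc_ge0 ?opnorm_ge0.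
  move=> x; rewrite -scalemxAl vnormZ -mulrA.
  by apply: ler_wpM2l; [exact: normc_ge0 | exact: opnorm_mulmx].
apply/eqP; rewrite eq_le scale_le /=.
have [->|z_neq0] := eqVneq z 0; first by rewrite ComplexField.Normc.normc0 mul0r opnorm_ge0.
have z_gt0 : 0 < normc z.
  by rewrite lt_def normc_ge0 andbT; apply: contra_neq z_neq0; exact: ComplexField.Normc.eq0_normc.
have := scale_le z^-1 (z *: A); rewrite scalerA mulVf // scale1r ComplexField.Normc.normcV.
by rewrite -(ler_pM2l z_gt0) mulrA mulfV ?gt_eqF // mul1r.
Qed.

Lemma opnormM (A B : M) : opnorm (A *m B) <= opnorm A * opnorm B.
Proof.
apply: opnorm_le; first by rewrite mulr_ge0 ?opnorm_ge0.
move=> x; rewrite -mulmxA; apply: le_trans (opnorm_mulmx A _) _.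
by rewrite -mulrA; apply: ler_wpM2l; [exact: opnorm_ge0 | exact: opnorm_mulmx].
Qed.

Lemma opnorm_adjmx (A : M) : opnorm (adjmx A) <= opnorm A.
Proof.
apply: (opnorm_le (opnorm_ge0 A)) => y.
set p := vnorm (adjmx A *m y).
have p_ge0 : 0 <= p := vnorm_ge0 _.
have h : p ^+ 2 <= vnorm y * (opnorm A * p).
  rewrite sqr_vnorm -[sqnorm _]/(Re (sqnorm _)%:C) -dotvv dotv_mull adjmxK.
  apply: le_trans (cauchy_schwarz _ _) _.
  by apply: ler_wpM2l; [exact: vnorm_ge0 | exact: opnorm_mulmx].
have [p0|p_neq0] := eqVneq p 0; first by rewrite p0 mulr_ge0 ?opnorm_ge0 ?vnorm_ge0.
have p_gt0 : 0 < p by rewrite lt_def p_neq0 p_ge0.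
by rewrite -(ler_pM2r p_gt0) -expr2; apply: le_trans h _; rewrite mulrA (mulrC (vnorm y)).
Qed.

Definition psd A := forall v, 0 <= dotv v (A *m v).

Lemma psd_adjmxM A : psd (adjmx A *m A).
Proof. by move=> v; rewrite -mulmxA (dotv_mulr (adjmx A)) adjmxK; exact: dotvv_ge0. Qed.

Lemma sesq_eq0 A : (forall u v, dotv u (A *m v) = 0) -> A = 0.
Proof.
move=> h; apply: mx_eq0 => v; apply: sqnorm_eq0.
by have := h (A *m v) v; rewrite dotvv => -[].
Qed.

Lemma quadform_eq0 A : (forall v, dotv v (A *m v) = 0) -> A = 0.
Proof.
move=> h; apply: sesq_eq0 => u v.
have h1 := h (u + v); rewrite mulmxDr dotvDl !dotvDr (h u) (h v) add0r addr0 in h1.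
have h2 := h (u + 'i *: v).
rewrite mulmxDr -scalemxAr dotvDl !dotvDr !dotvZl !dotvZr (h u) (h v) in h2.
rewrite add0r !mulr0 addr0 conji in h2.
have e : dotv v (A *m u) = - dotv u (A *m v) by apply/eqP; rewrite -addr_eq0 addrC h1.
have : (2 * 'i) * dotv u (A *m v) = 0 by rewrite -h2 e; ring.
move/eqP; rewrite mulf_eq0 => /orP[|/eqP //].
by rewrite mulf_eq0 pnatr_eq0 (negbTE (i_neq0 R)).
Qed.

Lemma psd_antisym A : psd A -> psd (- A) -> A = 0.
Proof.
move=> h1 h2; apply: quadform_eq0 => v; apply/eqP; rewrite eq_le h1 andbT.
by have := h2 v; rewrite mulNmx dotvNr oppr_ge0.
Qed.

Lemma psd_trmx A : psd A^T -> psd A.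
Proof.
move=> h v; have := h (map_mx conjc v).
have -> : dotv (map_mx conjc v) (A^T *m map_mx conjc v) = dotv v (A *m v); last by [].
rewrite !dotvE; under eq_bigr => i _ do rewrite !mxE mulr_sumr.
under [RHS]eq_bigr => i _ do rewrite !mxE mulr_sumr.
rewrite [LHS]exchange_big /=; apply: eq_bigr => i _; apply: eq_bigr => j _.
by rewrite !mxE conjcK [A i j * _]mulrC mulrCA [v j 0 * _]mulrC.
Qed.

Local Notation o1 := (lift ord0 ord0 : 'I_2).

Lemma block_pos1 A : block_pos (fun _ _ : 'I_1 => A) <-> psd A.
Proof.
have E (v : 'I_1 -> V) :
    \sum_(i < 1) \sum_(j < 1) (adjmx (v i) *m A *m v j) 0 0 = dotv (v ord0) (A *m v ord0).
  by rewrite !big_ord1 /dotv mulmxA.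
by split=> h v; [have := h (fun _ => v); rewrite E | rewrite E; apply: h].
Qed.

Lemma block_pos2 (X : 'I_2 -> 'I_2 -> M) : block_pos X <->
  forall v0 v1, 0 <= dotv v0 (X ord0 ord0 *m v0) + dotv v0 (X ord0 o1 *m v1) +
                     dotv v1 (X o1 ord0 *m v0) + dotv v1 (X o1 o1 *m v1).
Proof.
have E (v : 'I_2 -> V) : \sum_(i < 2) \sum_(j < 2) (adjmx (v i) *m X i j *m v j) 0 0 =
    dotv (v ord0) (X ord0 ord0 *m v ord0) + dotv (v ord0) (X ord0 o1 *m v o1) +
    dotv (v o1) (X o1 ord0 *m v ord0) + dotv (v o1) (X o1 o1 *m v o1).
  rewrite big_ord_recl big_ord1 big_ord_recl big_ord1 big_ord_recl big_ord1.
  by rewrite addrA /dotv !mulmxA.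
split=> [h v0 v1 | h v]; last by rewrite E; apply: h.
by have := h (fun i => if i == ord0 then v0 else v1); rewrite E.
Qed.

Section CompletelyPositive.
Variable F : M -> M.
Hypothesis cpF : completely_positive F.

Lemma cp_psd A : psd A -> psd (F A).
Proof. by move=> /block_pos1/cpF/block_pos1. Qed.

(* The quadratic form of F applied blockwise to [1, x; x^*, x^* x] = [1; x^*] [1, x] >= 0. *)
Lemma cp_block_ge0 (x : M) v0 v1 :
  0 <= dotv v0 (F 1%:M *m v0) + dotv v0 (F x *m v1) +
       dotv v1 (F (adjmx x) *m v0) + dotv v1 (F (adjmx x *m x) *m v1).
Proof.
pose X (i j : 'I_2) : M :=
  if i == ord0 then (if j == ord0 then 1%:M else x)
  else (if j == ord0 then adjmx x else adjmx x *m x).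
have /(block_pos2 (fun i j => F (X i j))).1 : block_pos (fun i j => F (X i j)).
  apply: cpF; apply/block_pos2 => w0 w1 /=.
  rewrite mul1mx (dotv_mulr (adjmx x) w1) adjmxK -mulmxA.
  rewrite (dotv_mulr (adjmx x) w1 (x *m w1)) adjmxK.
  by have := dotvv_ge0 (w0 + x *m w1); rewrite dotvDl !dotvDr !addrA.
exact.
Qed.

Lemma cp_adjmx (x : M) : F (adjmx x) = adjmx (F x).
Proof.
apply/eqP; rewrite -subr_eq0; apply/eqP; apply: sesq_eq0 => u v.
have diag_real (a b : V) :
    Im (dotv a (F 1%:M *m a)) = 0 /\ Im (dotv b (F (adjmx x *m x) *m b)) = 0.
  have /ge0cE[+ _] := cp_block_ge0 x a 0; have /ge0cE[+ _] := cp_block_ge0 x 0 b.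
  by rewrite !mulmx0 !dotv0l !dotv0r !add0r !addr0.
have [d1 d2] := diag_real v u; have [_ d3] := diag_real v ('i *: u).
have /ge0cE[h1 _] := cp_block_ge0 x v u.
have /ge0cE[h2 _] := cp_block_ge0 x v ('i *: u).
rewrite !ImD d1 d2 add0r addr0 in h1.
rewrite !ImD d1 d3 add0r addr0 -scalemxAr dotvZr dotvZl conji mulNr ImN !ImiM in h2.
rewrite mulmxBl dotvBr; apply/eqP; rewrite subr_eq0; apply/eqP.
rewrite -dotv_mull -[dotv (F x *m u) v]conj_dotv.
apply: complex_eqP; rewrite ?ReJ ?ImJ.
  by apply/esym/eqP; rewrite -subr_eq0 h2.
by apply/eqP; rewrite -addr_eq0 addrC h1.
Qed.

Lemma kadison_schwarz : F 1%:M = 1%:M ->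
  forall x : M, psd (F (adjmx x *m x) - F (adjmx x) *m F x).
Proof.
move=> F1 x w; have := cp_block_ge0 x (- (F x *m w)) w.
rewrite F1 mul1mx mulmxBl dotvBr -mulmxA dotvNl !dotvNr opprK mulmxN dotvNr.
by rewrite dotvNl addrN add0r addrC.
Qed.

End CompletelyPositive.

Section IdempotentPPT.
Variable phi : {linear M -> M}.
Hypothesis phi1 : phi 1%:M = 1%:M.
Hypothesis phi_ppt : PPT_map phi.
Hypothesis phiK : forall A, phi (phi A) = phi A.

Let phi_cp : completely_positive phi. Proof. by case: phi_ppt. Qed.
Let phiT_cp : completely_positive (fun A => (phi A)^T). Proof. by case: phi_ppt. Qed.

Lemma phi_adjmx (x : M) : phi (adjmx x) = adjmx (phi x).
Proof. exact: cp_adjmx. Qed.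

Lemma range_adjmx c : phi c = c -> phi (adjmx c) = adjmx c.
Proof. by move=> hc; rewrite phi_adjmx hc. Qed.

Lemma range_add a b : phi a = a -> phi b = b -> phi (a + b) = a + b.
Proof. by move=> ha hb; rewrite linearD /= ha hb. Qed.

Lemma range_scale (z : C) a : phi a = a -> phi (z *: a) = z *: a.
Proof. by move=> ha; rewrite linearZ /= ha. Qed.

Lemma range_schwarzT c : phi c = c -> psd (phi (c *m adjmx c) - adjmx c *m c).
Proof.
move=> hc; have phiT1 : (phi 1%:M)^T = 1%:M by rewrite phi1 trmx1.
have := kadison_schwarz phiT_cp phiT1 (adjmx c).
by rewrite /= adjmxK (range_adjmx hc) hc -trmx_mul -raddfB; exact: psd_trmx.
Qed.

Lemma range_normal c : phi c = c -> phi (adjmx c *m c) = phi (c *m adjmx c).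
Proof.
move=> hc; apply/eqP; rewrite -subr_eq0; apply/eqP; apply: psd_antisym.
  by have := cp_psd phi_cp (range_schwarzT (range_adjmx hc)); rewrite adjmxK linearB /= phiK.
by have := cp_psd phi_cp (range_schwarzT hc); rewrite linearB /= phiK opprB.
Qed.

Definition comm_form (x y : M) := phi (adjmx x *m y - y *m adjmx x).

Lemma comm_formDl x1 x2 y : comm_form (x1 + x2) y = comm_form x1 y + comm_form x2 y.
Proof. by rewrite /comm_form adjmxD mulmxDl mulmxDr -linearD /= opprD addrACA. Qed.

Lemma comm_formDr x y1 y2 : comm_form x (y1 + y2) = comm_form x y1 + comm_form x y2.
Proof. by rewrite /comm_form mulmxDl mulmxDr -linearD /= opprD addrACA. Qed.

Lemma comm_formZl (z : C) x y : comm_form (z *: x) y = conjc z *: comm_form x y.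
Proof. by rewrite /comm_form adjmxZ -scalemxAl -scalemxAr -scalerBr linearZ. Qed.

Lemma comm_formZr (z : C) x y : comm_form x (z *: y) = z *: comm_form x y.
Proof. by rewrite /comm_form -scalemxAl -scalemxAr -scalerBr linearZ. Qed.

Lemma comm_form_range x y : phi x = x -> phi y = y -> comm_form x y = 0.
Proof.
have diag (z : M) : phi z = z -> comm_form z z = 0.
  by move=> hz; rewrite /comm_form linearB /= range_normal // subrr.
move=> hx hy.
have := diag _ (range_add hx hy).
rewrite comm_formDl !comm_formDr (diag x hx) (diag y hy) add0r addr0 => /eqP.
rewrite addrC addr_eq0 => /eqP e.
have := diag _ (range_add (range_scale 'i hx) hy).
rewrite comm_formDl !comm_formDr (diag _ (range_scale 'i hx)) (diag y hy) add0r addr0.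
rewrite comm_formZl comm_formZr conji e scalerN -scaleNr -scalerDl => /eqP.
rewrite scaler_eq0 => /orP[|/eqP //].
by rewrite -opprD oppr_eq0 -mulr2n mulrn_eq0 (negbTE (i_neq0 R)).
Qed.

Lemma range_mul_comm a b : phi a = a -> phi b = b -> phi (a *m b) = phi (b *m a).
Proof.
move=> ha hb; have := comm_form_range (range_adjmx ha) hb.
by rewrite /comm_form adjmxK linearB /= => /eqP; rewrite subr_eq0 => /eqP.
Qed.

(* Schwarz applied to x = c^* + t y: since phi y = 0, the t-linear part phi (c y) must vanish. *)
Lemma range_mul_ker c y : phi c = c -> phi y = 0 -> phi (c *m y) = 0.
Proof.
move=> hc hy; set D := phi (c *m y); set K := phi (adjmx y *m y).
have K_psd : psd K by apply: cp_psd phi_cp _ (psd_adjmxM y).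
have perturb (t : C) : psd (t *: D + conjc t *: adjmx D + (conjc t * t) *: K).
  pose x := adjmx c + t *: y.
  have ex : adjmx x = c + conjc t *: adjmx y by rewrite adjmxD adjmxK adjmxZ.
  have phi_adj_x : phi (adjmx x) = c.
    by rewrite ex linearD linearZ /= phi_adjmx hy adjmx0 scaler0 addr0.
  have phi_x : phi x = adjmx c by rewrite linearD linearZ /= hy scaler0 addr0 (range_adjmx hc).
  have phi_xx : phi (adjmx x *m x) =
      phi (c *m adjmx c) + (t *: D + conjc t *: adjmx D + (conjc t * t) *: K).
    rewrite ex /x mulmxDl !mulmxDr -!scalemxAl -!scalemxAr scalerA !linearD !linearZ /=.
    by rewrite -adjmxM phi_adjmx -/D -/K !addrA.
  have := cp_psd phi_cp (kadison_schwarz phi_cp phi1 x).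
  rewrite phi_adj_x phi_x phi_xx; set E := t *: D + _ + _.
  have phiE : phi E = E by rewrite /E !linearD !linearZ /= phi_adjmx /D /K !phiK.
  by rewrite linearB linearD /= phiK phiE addrC addKr.
apply: quadform_eq0 => v.
apply: (@first_order_ge0_eq0 _ _ (dotv v (K *m v)) (K_psd v)) => t.
have := perturb t v; rewrite !mulmxDl !dotvDr -!scalemxAl !dotvZr.
by rewrite -dotv_mull -[dotv (D *m v) v]conj_dotv.
Qed.

Lemma phi_mulmx_phir c y : phi c = c -> phi (c *m y) = phi (c *m phi y).
Proof.
move=> hc; apply/eqP; rewrite -subr_eq0 -linearB -mulmxBr; apply/eqP.
by apply: range_mul_ker => //; rewrite linearB /= phiK subrr.
Qed.

Lemma phi_mulmx_phil c y : phi c = c -> phi (y *m c) = phi (phi y *m c).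
Proof.
move=> hc; apply: adjmx_inj; rewrite -!phi_adjmx !adjmxM (phi_mulmx_phir _ (range_adjmx hc)).
by rewrite phi_adjmx.
Qed.

Lemma range_mul_assoc a b c : phi a = a -> phi c = c ->
  phi (phi (a *m b) *m c) = phi (a *m phi (b *m c)).
Proof. by move=> ha hc; rewrite -(phi_mulmx_phil _ hc) -(phi_mulmx_phir _ ha) mulmxA. Qed.

Lemma opnorm_phi y : opnorm (phi y) <= opnorm y.
Proof.
apply: (opnorm_le (opnorm_ge0 y)) => x.
set L := opnorm y ^+ 2.
have gap_psd : psd ((L%:C)%:M - adjmx y *m y).
  move=> v; rewrite mulmxBl dotvBr mul_scalar_mx dotvZr -mulmxA.
  rewrite (dotv_mulr (adjmx y)) adjmxK !dotvv -rmorphM -rmorphB ler0c subr_ge0.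
  rewrite -!sqr_vnorm /L; have := opnorm_mulmx y v; have := vnorm_ge0 (y *m v).
  have := vnorm_ge0 v; have := opnorm_ge0 y; nra.
have := cp_psd phi_cp gap_psd x.
rewrite linearB /= -[(L%:C)%:M]scalemx1 linearZ /= phi1 scalemx1.
have := kadison_schwarz phi_cp phi1 y x; rewrite phi_adjmx.
move=> /ge0cE[_ schwarz_x] /ge0cE[_ gap_x].
rewrite !mulmxBl !dotvBr !ReB mul_scalar_mx dotvZr -mulmxA in schwarz_x gap_x.
rewrite (dotv_mulr (adjmx (phi y))) adjmxK ReRM !dotvv /= in schwarz_x gap_x.
rewrite vnorm_sqrt; apply: sqrtr_le_sqr; first by rewrite mulr_ge0 ?opnorm_ge0 ?vnorm_ge0.
rewrite exprMn sqr_vnorm -/L; lra.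
Qed.

Lemma range_opnorm_cstar a : phi a = a -> opnorm (phi (adjmx a *m a)) = opnorm a ^+ 2.
Proof.
move=> ha; set N := opnorm (phi (adjmx a *m a)); apply/eqP; rewrite eq_le; apply/andP; split.
  apply: le_trans (opnorm_phi _) _; apply: le_trans (opnormM _ _) _.
  by rewrite expr2; apply: ler_wpM2r; [exact: opnorm_ge0 | exact: opnorm_adjmx].
have N_ge0 : 0 <= N := opnorm_ge0 _.
suff : opnorm a <= Num.sqrt N by have := opnorm_ge0 a; have := sqr_sqrtr N_ge0; nra.
apply: (opnorm_le (sqrtr_ge0 N)) => x.
rewrite vnorm_sqrt; apply: sqrtr_le_sqr; first by rewrite mulr_ge0 ?sqrtr_ge0 ?vnorm_ge0.
have := kadison_schwarz phi_cp phi1 a x; rewrite (range_adjmx ha) ha.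
move=> /ge0cE[_]; rewrite mulmxBl dotvBr ReB -mulmxA (dotv_mulr (adjmx a)) adjmxK dotvv /=.
have := cauchy_schwarz x (phi (adjmx a *m a) *m x).
have : vnorm x * vnorm (phi (adjmx a *m a) *m x) <= N * sqnorm x.
  by rewrite -sqr_vnorm expr2 mulrCA; apply: ler_wpM2l; [exact: vnorm_ge0 | exact: opnorm_mulmx].
rewrite exprMn sqr_sqrtr // sqr_vnorm -/N; lra.
Qed.

End IdempotentPPT.
End Matrices.

Local Close Scope complex_scope.
Unset Implicit Arguments.
Set Strict Implicit.

Theorem mainTheorem4 (R : realType) (n : nat)
    (phi : {linear 'M[R[i]]_n -> 'M[R[i]]_n}) :
  phi 1%:M = 1%:M ->
  PPT_map phi ->
  (forall A, phi (phi A) = phi A) ->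
  let S := fun a : 'M[R[i]]_n => exists A, a = phi A in
  is_Cstar_algebra S (fun a b => phi (a *m b)) (@adjmx R n n) (@opnorm R n) /\
  is_abelian S (fun a b => phi (a *m b)).
Proof.
move=> phi1 phi_ppt phiK S.
have SP a : S a <-> phi a = a by split=> [[A ->] | ha]; [rewrite phiK | exists a].
split; last by move=> a b /SP ha /SP hb; exact: range_mul_comm.
split.
  split=> [|a b /SP ha /SP hb|z a /SP ha]; apply/SP;
    [exact: linear0 | exact: range_add | exact: range_scale].
split.
  split=> [a b _ _|a b c /SP ha _ /SP hc|a b c _ _ _|a b c _ _ _|z a b _ _].
  - by exists (a *m b).
  - exact: range_mul_assoc.
  - by rewrite mulmxDr linearD.
  - by rewrite mulmxDl linearD.
  - by rewrite -scalemxAl -scalemxAr !linearZ.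
split.
  split=> [a /SP ha|a _|a b _ _|z a _|a b _ _].
  - by apply/SP; exact: range_adjmx.
  - exact: adjmxK.
  - exact: adjmxD.
  - exact: adjmxZ.
  - by rewrite -phi_adjmx // adjmxM.
split=> [a _|a _|a b _ _|z a _|].
- exact: opnorm_ge0.
- exact: opnorm_eq0.
- exact: opnormD.
- exact: opnormZ.
split=> [a b _ _|a /SP ha]; last exact: range_opnorm_cstar.
exact: le_trans (opnorm_phi phi1 phi_ppt _) (opnormM _ _).
Qed.
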